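(* For $n\ge0$ let $Q_n^L(x)=\sum_{r=0}^{n}\left[\binom{n}{r}\sum_{\ell=0}^{r}\binom{r}{\ell}\frac{1}{\ell!}\right](-x)^r$ (the coefficient polynomials of the linear transformation $x^n\mapsto L_n(x)$). Then for all $n\ge0$, $$(n+1)Q^L_{n+1}(x)=(x-2x^2+x^3)(Q^L_n)'(x)+(n+1-2x-nx^2)Q^L_n(x).$$
   Context: $L_n(x)=\sum_{k=0}^n\binom{n}{k}\frac{(-x)^k}{k!}$ is the $n$th Laguerre polynomial; coefficient polynomials $Q_k$ of a linear operator $T$ on $\mathbb{C}[x]$ are defined by the unique representation $T=\sum_k\frac{Q_k(x)}{k!}D^k$, $D=d/dx$. *)

From mathcomp Require Import all_boot all_order all_algebra.
Set Implicit Arguments. Unset Strict Implicit. Unset Printing Implicit Defensive.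
Import GRing.Theory Num.Theory.
Local Open Scope ring_scope.

Definition QL (R : numFieldType) (n : nat) : {poly R} :=
  \sum_(r < n.+1)
     (('C(n, r))%:R * \sum_(l < r.+1) ('C(r, l))%:R / (l`!)%:R) *: (- 'X) ^+ r.

From mathcomp Require Import all_boot all_order all_algebra ring zify.
Import GRing.Theory Num.Theory.
Local Open Scope ring_scope.

(* The coefficient of x^k in Q^L_n is (-1)^k C(n,k) L_k(-1).  Comparing
   coefficients of x^(k+2), the identity becomes a relation between the values
   C(n,j) L_j(-1) for j = k, k+1, k+2; it follows from Pascal-type identities
   for C(n,_) together with the three-term recurrence
   (k+2) L_(k+2) = (2k+3-x) L_(k+1) - (k+1) L_k taken at x = -1.  That
   recurrence in turn holds term by term in the defining sums. *)

Lemma mulSn_binS n m :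
  (n.+1 * 'C(n.+1, m.+1) = (n + m.+2) * 'C(n, m.+1) + m.+1 * 'C(n, m))%N.
Proof.
have := mul_bin_left n m; rewrite binS; case: (leqP m n) => [le_mn|lt_nm] eq_m.
  nia.
by rewrite !bin_small //; lia.
Qed.

Lemma laguerre_bin_rec k l :
  (k.+2 * 'C(k.+2, l) + k.+1 * 'C(k, l)
   = (2 * k + 3) * 'C(k.+1, l) + l * 'C(k.+1, l.-1))%N.
Proof.
case: l => [|l] /=; first by rewrite !bin0; lia.
have := mul_bin_down k.+1 l; rewrite /= !binS.
case: (leqP l k.+1) => [le_lk|lt_kl] eq_l.
  nia.
by rewrite !bin_small //; lia.
Qed.

Lemma natr_mul_binS (R : pzRingType) n i :
  i.+1%:R * 'C(n, i.+1)%:R = (n%:R - i%:R) * 'C(n, i)%:R :> R.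
Proof.
case: (leqP i n) => [le_in|lt_ni].
  by rewrite -natrB // -!natrM mul_bin_left.
by rewrite !bin_small ?mulr0 //; apply: ltnW.
Qed.

Lemma coef_XM_deriv {R : nzRingType} (p : {poly R}) i :
  ('X * p^`())`_i = p`_i *+ i.
Proof. by rewrite coefXM; case: i => [|i] //=; rewrite coef_deriv. Qed.

Section LaguerreAtMinusOne.

Variable R : numFieldType.

Definition laguerreN1 k : R := \sum_(l < k.+1) 'C(k, l)%:R / l`!%:R.

Lemma laguerreN1_widen k N : (k < N)%N ->
  laguerreN1 k = \sum_(l < N) 'C(k, l)%:R / l`!%:R.
Proof.
move=> lt_kN; rewrite /laguerreN1 (big_ord_widen N (fun l => 'C(k, l)%:R / l`!%:R)) //.
rewrite big_mkcond; apply: eq_bigr => l _ /=.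
by case: ltnP => // lt_kl; rewrite bin_small // mul0r.
Qed.

Lemma laguerreN1_rec k :
  k.+2%:R * laguerreN1 k.+2 + k.+1%:R * laguerreN1 k
  = (2 * k.+2)%:R * laguerreN1 k.+1.
Proof.
have lt_k_k3 : (k < k.+3)%N by apply: ltnW.
rewrite !(@laguerreN1_widen _ k.+3) // !mulr_sumr -big_split /=.
have shifted_sum : \sum_(l < k.+3) (l * 'C(k.+1, l.-1))%:R / l`!%:R
             = \sum_(l < k.+3) 'C(k.+1, l)%:R / l`!%:R :> R.
  rewrite big_ord_recl [RHS]big_ord_recr /= mul0n mul0r add0r.
  rewrite bin_small // mul0r addr0; apply: eq_bigr => l _ /=.
  by rewrite factS !natrM invfM mulrACA mulfV ?mul1r // pnatr_eq0.
rewrite (eq_bigr (fun l : 'I_k.+3 => (2 * k + 3)%:R * ('C(k.+1, l)%:R / l`!%:R)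
                   + (l * 'C(k.+1, l.-1))%:R / l`!%:R)); last first.
  by move=> l _; rewrite !mulrA -!mulrDl -!natrM -natrD laguerre_bin_rec natrD.
rewrite big_split /= shifted_sum -!mulr_sumr -[X in _ + X]mul1r -mulrDl natr1.
by congr (_%:R * _); lia.
Qed.

Lemma coef_QL n k : (QL R n)`_k = (-1) ^+ k * ('C(n, k)%:R * laguerreN1 k).
Proof.
have -> : QL R n = \poly_(r < n.+1) ((-1) ^+ r * ('C(n, r)%:R * laguerreN1 r)).
  rewrite poly_def; apply: eq_bigr => r _.
  by rewrite -scaleN1r exprZn scalerA mulrC.
rewrite coef_poly; case: ltnP => // lt_nk.
by rewrite bin_small // mul0r mulr0.
Qed.

Lemma bin_laguerreN1_rec n i :
  n.+1%:R * ('C(n.+1, i.+2)%:R * laguerreN1 i.+2)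
  = (n + i.+3)%:R * ('C(n, i.+2)%:R * laguerreN1 i.+2)
    + (2 * i.+2)%:R * ('C(n, i.+1)%:R * laguerreN1 i.+1)
    + (i%:R - n%:R) * ('C(n, i)%:R * laguerreN1 i).
Proof.
have pascal : n.+1%:R * 'C(n.+1, i.+2)%:R
    = (n + i.+3)%:R * 'C(n, i.+2)%:R + i.+2%:R * 'C(n, i.+1)%:R :> R.
  by rewrite -!natrM -natrD mulSn_binS.
have lag : i.+2%:R * laguerreN1 i.+2
    = (2 * i.+2)%:R * laguerreN1 i.+1 - i.+1%:R * laguerreN1 i.
  by rewrite -laguerreN1_rec addrK.
have -> : (i%:R - n%:R) * ('C(n, i)%:R * laguerreN1 i)
    = - (i.+1%:R * 'C(n, i.+1)%:R) * laguerreN1 i.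
  by rewrite natr_mul_binS; ring.
rewrite mulrA pascal mulrDl -!mulrA -addrA; congr (_ + _).
by rewrite mulrCA lag; ring.
Qed.

End LaguerreAtMinusOne.

Theorem lemma5p2 (R : numFieldType) (n : nat) :
  (n.+1)%:R *: QL R n.+1 =
    ('X - 2%:R *: 'X ^+ 2 + 'X ^+ 3) * (QL R n)^`()
    + ((n.+1)%:R%:P - 2%:R *: 'X - n%:R *: 'X ^+ 2) * QL R n.
Proof.
set P := QL R n.
have -> : ('X - 2%:R *: 'X ^+ 2 + 'X ^+ 3) * P^`()
    + ((n.+1)%:R%:P - 2%:R *: 'X - n%:R *: 'X ^+ 2) * P
  = 'X * P^`() - 2%:R *: ('X * ('X * P^`())) + 'X * ('X * ('X * P^`()))
    + n.+1%:R *: P - 2%:R *: ('X * P) - n%:R *: ('X * ('X * P)).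
  by rewrite -!mul_polyC; ring.
(* Abstracting X P' keeps [coefXM] from unfolding it below. *)
have := coef_XM_deriv P; move: ('X * P^`()) => D coef_D.
apply/polyP => k; rewrite !(coefD, coefN, coefZ) !coefXM.
case: k => [|[|i]] /=; rewrite !coef_D !coef_QL.
- by rewrite !bin0 /laguerreN1 !big_ord1 bin0 fact0 divr1; ring.
- rewrite !bin0 !bin1 /laguerreN1 !big_ord_recr !big_ord0 /= !bin0 binn.
  by rewrite fact0 divr1; ring.
- by rewrite mulrCA bin_laguerreN1_rec !exprS; ring.
Qed.
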